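(* For every complex operator ideal $\mathfrak C$ one has $(\mathfrak C_{\mathbb R})_{\mathbb C}\subseteq\mathfrak C$. Moreover, the following are equivalent: (1) $\mathfrak C$ is self conjugate, i.e. $\overline{\mathfrak C}=\mathfrak C$; (2) $(\mathfrak C_{\mathbb R})_{\mathbb C}=\mathfrak C$.
   Context: A Banach space with an $i$-operator is a pair $[X,A]$ with $X$ a real Banach space and $A:X\to X$ bounded linear with $A^2=-I_X$ and $\|\alpha x+\beta Ax\|=\|x\|$ whenever $\alpha^2+\beta^2=1$; these are exactly complex Banach spaces. A bounded linear $T:X\to Y$ with $TA=BT$ is a complex operator $[T,A,B]:[X,A]\to[Y,B]$, and its complex conjugate is $\overline{[T,A,B]}=[T,-A,-B]:[X,-A]\to[Y,-B]$. Real (resp. complex) operator ideals in the sense of Pietsch assign to each pair of real Banach spaces (resp. Banach spaces with an $i$-operator) a linear subspace of bounded (complex) operators containing the finite rank ones and stable under composition on either side with bounded (complex) operators. The conjugate ideal is $\overline{\mathfrak C}=\{\overline{[T,A,B]}:[T,A,B]\in\mathfrak C\}$. For a real Banach space $X$, $N_X(x_1,x_2)=(-x_2,x_1)$ and $[X\oplus X,N_X]$, with norm $\|(x_1,x_2)\|=\left(\frac1{2\pi}\int_{-\pi}^{\pi}\|x_1\cos\phi+x_2\sin\phi\|^2d\phi\right)^{1/2}$, is the complexification of $X$. The real form of $\mathfrak C$ is $\mathfrak C_{\mathbb R}(X,Y)=\{T:X\to Y\text{ bounded linear}:[T\oplus T,N_X,N_Y]\in\mathfrak C([X\oplus X,N_X],[Y\oplus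 Y,N_Y])\}$ with $(T\oplus T)(x_1,x_2)=(Tx_1,Tx_2)$. For a real ideal $\mathfrak R$, its complexification is $\mathfrak R_{\mathbb C}([X,A],[Y,B])=\{[T,A,B]:TA=BT,\ T\in\mathfrak R(X,Y)\}$. *)

From HB Require Import structures.
From mathcomp Require Import all_boot all_order all_algebra.
From mathcomp Require Import all_classical all_reals all_analysis.
Set Implicit Arguments. Unset Strict Implicit. Unset Printing Implicit Defensive.
Import Order.TTheory GRing.Theory Num.Theory.
Local Open Scope ring_scope.
Local Open Scope classical_set_scope.

Section Defs.
Variable R : realType.

Record nspace := NSpace { carrier :> lmodType R ; nrm : carrier -> R }.

Definition is_banach (X : nspace) : Prop :=
  [/\ (forall x : X, nrm x = 0 -> x = 0),
      (forall (a : R) (x : X), nrm (a *: x) = `|a| * nrm x),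
      (forall x y : X, nrm (x + y) <= nrm x + nrm y) &
      (forall u : nat -> X,
         (forall e : R, 0 < e -> exists N, forall m n, (N <= m)%N -> (N <= n)%N ->
             nrm (u m - u n) < e) ->
         exists l : X, forall e : R, 0 < e -> exists N, forall n, (N <= n)%N ->
             nrm (u n - l) < e)].

Definition bounded_linear (X Y : nspace) (T : X -> Y) : Prop :=
  (forall (a : R) (x y : X), T (a *: x + y) = a *: T x + T y) /\
  (exists M : R, forall x : X, nrm (T x) <= M * nrm x).

Definition finite_rank (X Y : nspace) (T : X -> Y) : Prop :=
  exists (n : nat) (s : 'I_n -> Y), forall x : X,
    exists c : 'I_n -> R, T x = \sum_(i < n) c i *: s i.

Definition iop (X : nspace) (A : X -> X) : Prop :=
  [/\ bounded_linear A,
      (forall x : X, A (A x) = - x) &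
      (forall (a b : R) (x : X), a ^+ 2 + b ^+ 2 = 1 -> nrm (a *: x + b *: A x) = nrm x)].

Definition cop (X Y : nspace) (A : X -> X) (B : Y -> Y) (T : X -> Y) : Prop :=
  bounded_linear T /\ (forall x, T (A x) = B (T x)).

Definition cideal_fam := forall (X Y : nspace), (X -> X) -> (Y -> Y) -> set (X -> Y).

Definition complex_operator_ideal (C : cideal_fam) : Prop :=
  forall (X Y : nspace) (A : X -> X) (B : Y -> Y),
    is_banach X -> is_banach Y -> iop A -> iop B ->
  [/\ (forall T, C X Y A B T -> cop A B T),
      (forall T, cop A B T -> finite_rank T -> C X Y A B T),
      (forall T1 T2, C X Y A B T1 -> C X Y A B T2 -> C X Y A B (fun x => T1 x + T2 x)),
      (forall (a b : R) T, C X Y A B T -> C X Y A B (fun x => a *: T x + b *: B (T x))) &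
      (forall (W Z : nspace) (Aw : W -> W) (Bz : Z -> Z) (S : W -> X) (U : Y -> Z) T,
         is_banach W -> is_banach Z -> iop Aw -> iop Bz ->
         cop Aw A S -> C X Y A B T -> cop B Bz U ->
         C W Z Aw Bz (fun w => U (T (S w))))].

Definition cplx_norm (X : nspace) (x : (X * X)%type) : R :=
  Num.sqrt ((2 * pi)^-1 *
    fine (\int[lebesgue_measure]_(t in [set t : R | - pi <= t <= pi])
             ((nrm (cos t *: x.1 + sin t *: x.2)) ^+ 2)%:E)).

Definition cplx (X : nspace) : nspace := @NSpace (X * X)%type (@cplx_norm X).

Definition NX (X : nspace) : cplx X -> cplx X := fun x => (- x.2, x.1).

Definition dsum (X Y : nspace) (T : X -> Y) : cplx X -> cplx Y :=
  fun x => (T x.1, T x.2).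

Definition real_form (C : cideal_fam) (X Y : nspace) : set (X -> Y) :=
  [set T | bounded_linear T /\ C (cplx X) (cplx Y) (@NX X) (@NX Y) (dsum T)].

Definition complexify (Rr : forall X Y : nspace, set (X -> Y)) : cideal_fam :=
  fun X Y A B => [set T | (forall x, T (A x) = B (T x)) /\ Rr X Y T].

Definition conj_ideal (C : cideal_fam) : cideal_fam :=
  fun X Y A B => C X Y (fun x => - A x) (fun y => - B y).

Definition cideal_sub (C1 C2 : cideal_fam) : Prop :=
  forall (X Y : nspace) (A : X -> X) (B : Y -> Y),
    is_banach X -> is_banach Y -> iop A -> iop B -> C1 X Y A B `<=` C2 X Y A B.

Definition cideal_eq (C1 C2 : cideal_fam) : Prop :=
  forall (X Y : nspace) (A : X -> X) (B : Y -> Y),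
    is_banach X -> is_banach Y -> iop A -> iop B -> C1 X Y A B = C2 X Y A B.

Definition self_conjugate (C : cideal_fam) : Prop := cideal_eq (conj_ideal C) C.

End Defs.

From mathcomp Require Import all_boot all_order all_algebra.
From mathcomp Require Import all_classical all_reals all_analysis.
From mathcomp Require Import ring lra.
Set Implicit Arguments. Unset Strict Implicit. Unset Printing Implicit Defensive.
Import Order.TTheory GRing.Theory Num.Theory.
Import numFieldNormedType.Exports.
Local Open Scope ring_scope.
Local Open Scope classical_set_scope.

(* The norm of the complexification is the quadratic mean, over a period, of
   t |-> ||x1 cos t + x2 sin t||.  It is complete and equivalent to the product
   norm, because ||x_k|| <= 2 ||(x1, x2)|| <= 2 (||x1|| + ||x2||), and N_X is an
   i-operator because multiplying by cos th + i sin th shifts t by th.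
   For [X, A] the maps J x = (x, - A x) and P y = (y1 + B y2) / 2 are complex
   operators [X, A] -> [X (+) X, N_X] and [Y (+) Y, N_Y] -> [Y, B] with
   P (T (+) T) J = T whenever T A = B T; hence (C_R)_C is contained in C.
   Conversely T (+) T = J_B T P_A + J_(-B) T P_(-A), and the second summand
   factors through T seen as a member of the conjugate ideal, so self-conjugacy
   gives the reverse inclusion; finally (C_R)_C is always self-conjugate, since
   T A = B T iff T (- A) = (- B) T. *)

Section PeriodicIntegral.
Variable R : realType.
Notation mu := (@lebesgue_measure R).

Lemma continuous_itv_integrable (f : R -> R) (a b : R) : continuous f ->
  mu.-integrable `[a, b] (EFin \o f).
Proof.
move=> cf; apply: continuous_compact_integrable; first exact: segment_compact.
exact: continuous_subspaceT.
Qed.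

Lemma continuous_shift_arg (f : R -> R) (c : R) : continuous f ->
  continuous (fun t => f (t + c)).
Proof.
move=> cf t; apply: (@continuous_comp _ _ _ (fun s => s + c) f); last exact: cf.
by apply: cvgD; [exact: cvg_id | exact: cvg_cst].
Qed.

Lemma Rintegral_shift (f : R -> R) (a b c : R) : a <= b -> continuous f ->
  \int[mu]_(x in `[a + c, b + c]) f x = \int[mu]_(x in `[a, b]) f (x + c).
Proof.
move=> ab cf.
have shift_derive : (fun x : R => x + c)^`()%classic = cst 1.
  by apply/funext => x; rewrite derive1E deriveD// derive_id derive_cst addr0.
rewrite /Rintegral (@integration_by_substitution_increasing R (fun x => x + c) f a b ab).
- by congr fine; apply: eq_integral => x _; rewrite /= shift_derive /= mulr1.
- by move=> x y _ _; rewrite ltrD2r.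
- by rewrite shift_derive => x _; exact: cst_continuous.
- by rewrite shift_derive; exact: is_cvg_cst.
- by rewrite shift_derive; exact: is_cvg_cst.
- split; first by move=> x _; apply: derivableD.
  + by apply: cvg_at_right_filter; apply: cvgD; [exact: cvg_id | exact: cvg_cst].
  + by apply: cvg_at_left_filter; apply: cvgD; [exact: cvg_id | exact: cvg_cst].
- exact: continuous_subspaceT.
Qed.

Lemma Rintegral_itv_split (f : R -> R) (a m b : R) : a <= m -> m <= b ->
  continuous f ->
  \int[mu]_(x in `[a, b]) f x =
  \int[mu]_(x in `[a, m]) f x + \int[mu]_(x in `[m, b]) f x.
Proof.
move=> am mb cf.
have := @Rintegral_itvB R f (BLeft a) (BRight b) m (continuous_itv_integrable _ _ cf).
rewrite !bnd_simp => /(_ am mb) split_ab.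
rewrite -(@Rintegral_itv_obnd_cbnd R m (BRight b) f); last first.
  apply: integrableS (continuous_itv_integrable m b cf) => //.
  by apply/subset_itvP => x; rewrite /= !in_itv/= => /andP[/ltW -> ->].
by rewrite -split_ab addrC subrK.
Qed.

(* Split [a + c, b + c] at b and move [b, b + c] back by one period. *)
Lemma Rintegral_periodic_shift_ge0 (f : R -> R) (a b c : R) : continuous f ->
  periodic f (b - a) -> 0 <= c <= b - a ->
  \int[mu]_(x in `[a, b]) f (x + c) = \int[mu]_(x in `[a, b]) f x.
Proof.
move=> cf fp /andP[c0 cp].
rewrite -Rintegral_shift; [|lra|exact: cf].
rewrite [LHS](@Rintegral_itv_split _ _ b); [|lra|lra|exact: cf].
have -> : \int[mu]_(x in `[b, b + c]) f x = \int[mu]_(x in `[a, a + c]) f x.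
  transitivity (\int[mu]_(x in `[a, a + c]) f (x + (b - a))).
    by rewrite -Rintegral_shift; [rewrite addrAC subrKC | lra | exact: cf].
  by apply: eq_Rintegral => x _; rewrite fp.
by rewrite addrC -Rintegral_itv_split//; lra.
Qed.

Lemma Rintegral_periodic_shift (f : R -> R) (a b c : R) : continuous f ->
  periodic f (b - a) -> - (b - a) <= c <= b - a ->
  \int[mu]_(x in `[a, b]) f (x + c) = \int[mu]_(x in `[a, b]) f x.
Proof.
move=> cf fp /andP[cm cp].
have [c0|c0] := leP 0 c; first by apply: Rintegral_periodic_shift_ge0; rewrite ?c0.
rewrite -(@Rintegral_periodic_shift_ge0 f a b (c + (b - a))) //; last lra.
by apply: eq_Rintegral => x _; rewrite addrA fp.
Qed.

End PeriodicIntegral.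

Section BanachNorm.
Variables (R : realType) (X : nspace R).
Hypothesis hX : is_banach X.

Lemma nrm_eq0 (x : X) : nrm x = 0 -> x = 0.
Proof. by case: hX => nrm_eq0 _ _ _; apply: nrm_eq0. Qed.

Lemma nrmZ (a : R) (x : X) : nrm (a *: x) = `|a| * nrm x.
Proof. by case: hX. Qed.

Lemma nrmD (x y : X) : nrm (x + y) <= nrm x + nrm y.
Proof. by case: hX. Qed.

Lemma nrmN (x : X) : nrm (- x) = nrm x.
Proof. by rewrite -scaleN1r nrmZ normrN normr1 mul1r. Qed.

Lemma nrm_ge0 (x : X) : 0 <= nrm x.
Proof.
have nrm0 : nrm (0 : X) = 0 by rewrite -(scale0r (0 : X)) nrmZ normr0 mul0r.
by have := nrmD x (- x); rewrite subrr nrm0 nrmN; lra.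
Qed.

Lemma ler_dist_nrm (x y : X) : `|nrm x - nrm y| <= nrm (x - y).
Proof.
rewrite ler_norml; apply/andP; split.
- by have := nrmD (y - x) x; rewrite subrK -opprB nrmN; lra.
- by have := nrmD (x - y) y; rewrite subrK; lra.
Qed.

Lemma nrm_combination (a b : R) (x1 x2 : X) :
  nrm (a *: x1 + b *: x2) <= `|a| * nrm x1 + `|b| * nrm x2.
Proof. by rewrite -!nrmZ nrmD. Qed.

Lemma nrm_combination_le (a b : R) (x1 x2 : X) : `|a| <= 1 -> `|b| <= 1 ->
  nrm (a *: x1 + b *: x2) <= nrm x1 + nrm x2.
Proof.
move=> a1 b1; apply: le_trans (nrm_combination _ _ _ _) _.
by rewrite lerD // ler_piMl ?nrm_ge0.
Qed.

Lemma continuous_nrm_combination (p q : R -> R) (x1 x2 : X) :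
  continuous p -> continuous q ->
  continuous (fun t => nrm (p t *: x1 + q t *: x2)).
Proof.
move=> cp cq s; apply/cvgrPdist_lt => e e0.
pose K := nrm x1 + nrm x2 + 1.
have K0 : 0 < K by rewrite /K; have := nrm_ge0 x1; have := nrm_ge0 x2; lra.
have eK0 : 0 < e / K by rewrite divr_gt0.
have /cvgrPdist_lt/(_ _ eK0) near_p := cp s.
have /cvgrPdist_lt/(_ _ eK0) near_q := cq s.
near=> t.
apply: le_lt_trans (ler_dist_nrm _ _) _.
rewrite opprD addrACA -!scalerBl.
apply: le_lt_trans (nrm_combination _ _ _ _) _.
have bound_p : `|p s - p t| * nrm x1 <= e / K * nrm x1.
  by rewrite ler_wpM2r ?nrm_ge0 // ltW //; near: t.
have bound_q : `|q s - q t| * nrm x2 <= e / K * nrm x2.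
  by rewrite ler_wpM2r ?nrm_ge0 // ltW //; near: t.
have : e / K * (nrm x1 + nrm x2) < e / K * K by rewrite ltr_pM2l // /K ltrDl.
rewrite divfK ?gt_eqF // mulrDr; lra.
Unshelve. all: end_near.
Qed.

End BanachNorm.

Lemma scaler_comb2 (R : ringType) (V : lmodType R) (a b c d e f : R) (u w : V) :
  a *: (c *: u + d *: w) + b *: (e *: u + f *: w) =
  (a * c + b * e) *: u + (a * d + b * f) *: w.
Proof. by rewrite !scalerDr !scalerA addrACA !scalerDl. Qed.

Lemma sqrrD_le_weighted (R : realFieldType) (u w s : R) : 0 < s ->
  (u + w) ^+ 2 <= (1 + s) * u ^+ 2 + (1 + s^-1) * w ^+ 2.
Proof.
move=> s_gt0; rewrite -subr_ge0 (_ : _ - _ = (s * u - w) ^+ 2 / s).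
  by rewrite divr_ge0 ?sqr_ge0 ?ltW.
by field; rewrite gt_eqF.
Qed.

Lemma exists_angle (R : realType) (a b : R) : a ^+ 2 + b ^+ 2 = 1 ->
  exists2 th, cos th = a /\ sin th = b & - pi <= th <= pi.
Proof.
move=> ab1.
have a_itv : -1 <= a <= 1 by apply/andP; split; nra.
have sqrt_b : Num.sqrt (1 - a ^+ 2) = `|b| by rewrite -sqrtr_sqr; congr Num.sqrt; lra.
have acos_ge0 := acos_ge0 a_itv; have acos_lepi := acos_lepi a_itv.
have cos_acos : cos (acos a) = a by apply: acosK; rewrite in_itv.
have [b0|b0] := leP 0 b.
- exists (acos a); last by have := pi_ge0 R; lra.
  by rewrite sin_acos // sqrt_b ger0_norm.
- exists (- acos a); last by lra.
  by rewrite cosN sinN sin_acos // sqrt_b ltr0_norm // opprK.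
Qed.

Section Complexification.
Variables (R : realType) (X : nspace R).
Hypothesis hX : is_banach X.
Notation mu := (@lebesgue_measure R).
Local Notation cnorm := (@cplx_norm R X).

Definition rot_nrm (x : X * X) (t : R) := nrm (cos t *: x.1 + sin t *: x.2).

Definition cplx_int (x : X * X) := \int[mu]_(t in `[- pi, pi]) rot_nrm x t ^+ 2.

Lemma rot_nrm_ge0 x t : 0 <= rot_nrm x t.
Proof. exact: nrm_ge0. Qed.

Lemma continuous_rot_nrm2 x : continuous (fun t : R => rot_nrm x t ^+ 2).
Proof.
have nrm_cont : continuous (rot_nrm x).
  apply: continuous_nrm_combination => //.
  - exact: continuous_cos.
  - exact: continuous_sin.
by move=> t; exact: (continuous_comp (nrm_cont t) (@exprn_continuous R 2 _)).
Qed.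

Lemma Rintegral_cst_pi (k : R) : \int[mu]_(t in `[- pi, pi]) k = 2 * pi * k.
Proof.
have pi_gt0 := pi_gt0 R.
have itv_length : fine (mu `[- pi, pi]) = 2 * pi.
  by rewrite lebesgue_measure_itv /= lte_fin ifT /= ?opprK; lra.
by rewrite Rintegral_cst // itv_length mulrC.
Qed.

Lemma cplx_int_shift x (c : R) : - (pi *+ 2) <= c <= pi *+ 2 ->
  \int[mu]_(t in `[- pi, pi]) rot_nrm x (t + c) ^+ 2 = cplx_int x.
Proof.
have period : pi - - pi = pi *+ 2 :> R by rewrite opprK mulr2n.
move=> c_itv; apply: (@Rintegral_periodic_shift _ (fun t => rot_nrm x t ^+ 2)).
- exact: continuous_rot_nrm2.
- by rewrite period => t; rewrite /rot_nrm cosD2pi sinD2pi.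
- by rewrite period.
Qed.

Lemma cplx_int_ge0 x : 0 <= cplx_int x.
Proof. by apply: Rintegral_ge0 => t _; exact: sqr_ge0. Qed.

Lemma cplx_normE x : cnorm x = Num.sqrt ((2 * pi)^-1 * cplx_int x).
Proof. by []. Qed.

Lemma cplx_norm_ge0 x : 0 <= cnorm x.
Proof. by rewrite cplx_normE sqrtr_ge0. Qed.

Lemma cplx_int_norm x : cplx_int x = 2 * pi * cnorm x ^+ 2.
Proof.
have pi_gt0 := pi_gt0 R.
rewrite cplx_normE sqr_sqrtr ?mulVKf //; first by rewrite mulf_neq0 // gt_eqF.
by rewrite mulr_ge0 ?cplx_int_ge0 // invr_ge0 mulr_ge0 // ltW.
Qed.

Lemma cplx_norm_le_of_int x k : 0 <= k -> cplx_int x <= 2 * pi * k ^+ 2 -> cnorm x <= k.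
Proof.
move=> k0; rewrite cplx_int_norm ler_pM2l ?mulr_gt0 ?pi_gt0 //.
by rewrite ler_sqr ?nnegrE ?cplx_norm_ge0.
Qed.

Lemma cplx_norm_ge_of_int x k : 0 <= k -> 2 * pi * k ^+ 2 <= cplx_int x -> k <= cnorm x.
Proof.
move=> k0; rewrite cplx_int_norm ler_pM2l ?mulr_gt0 ?pi_gt0 //.
by rewrite ler_sqr ?nnegrE ?cplx_norm_ge0.
Qed.

Lemma cplx_norm_le_add x : cnorm x <= nrm x.1 + nrm x.2.
Proof.
apply: cplx_norm_le_of_int; first by rewrite addr_ge0 ?nrm_ge0.
rewrite -Rintegral_cst_pi; apply: le_Rintegral => //.
- exact/continuous_itv_integrable/continuous_rot_nrm2.
- exact/continuous_itv_integrable/cst_continuous.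
move=> t _; rewrite ler_sqr ?nnegrE ?rot_nrm_ge0 ?addr_ge0 ?nrm_ge0 //.
by apply: nrm_combination_le => //; [exact: cos_max | exact: sin_max].
Qed.

Lemma nrm_le_rot_nrm x t :
  nrm x.1 <= rot_nrm x t + rot_nrm x (t + pi / 2) /\
  nrm x.2 <= rot_nrm x t + rot_nrm x (t + pi / 2).
Proof.
rewrite /rot_nrm cosDpihalf sinDpihalf.
have comb1 : x.1 = 1 *: x.1 + 0 *: x.2 by rewrite scale1r scale0r addr0.
have comb2 : x.2 = 0 *: x.1 + 1 *: x.2 by rewrite scale1r scale0r add0r.
have sin_cos1 : 1 = cos t * cos t + sin t * sin t by rewrite -!expr2 cos2Dsin2.
split.
- rewrite [in nrm x.1]comb1 (_ : 1 *: x.1 + _ = cos t *: (cos t *: x.1 + sin t *: x.2)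
      + (- sin t) *: (- sin t *: x.1 + cos t *: x.2)).
    by apply: nrm_combination_le; rewrite ?normrN ?cos_max ?sin_max.
  by rewrite scaler_comb2 sin_cos1; congr (_ *: _ + _ *: _); ring.
- rewrite [in nrm x.2]comb2 (_ : 0 *: x.1 + _ = sin t *: (cos t *: x.1 + sin t *: x.2)
      + cos t *: (- sin t *: x.1 + cos t *: x.2)).
    by apply: nrm_combination_le; rewrite ?cos_max ?sin_max.
  by rewrite scaler_comb2 sin_cos1; congr (_ *: _ + _ *: _); ring.
Qed.

Lemma nrm_le_cplx_norm x : nrm x.1 <= 2 * cnorm x /\ nrm x.2 <= 2 * cnorm x.
Proof.
suff bound k : 0 <= k -> (forall t, k <= rot_nrm x t + rot_nrm x (t + pi / 2)) ->
    k <= 2 * cnorm x.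
  by split; apply: bound; rewrite ?nrm_ge0 // => t; case: (nrm_le_rot_nrm x t).
move=> k0 k_le.
suff : k / 2 <= cnorm x by lra.
apply: cplx_norm_ge_of_int; first lra.
have pi_gt0 := pi_gt0 R.
have shift_int := cplx_int_shift x (c := pi / 2).
have cont_r := continuous_rot_nrm2 (x := x).
have cont_r_shift := continuous_shift_arg (c := pi / 2) cont_r.
have two_int : cplx_int x + cplx_int x =
    \int[mu]_(t in `[- pi, pi]) (rot_nrm x t ^+ 2 + rot_nrm x (t + pi / 2) ^+ 2).
  rewrite RintegralD ?continuous_itv_integrable //.
  by rewrite shift_int // mulr2n; lra.
suff : 2 * pi * (2 * (k / 2) ^+ 2) <= cplx_int x + cplx_int x by nra.
rewrite two_int -Rintegral_cst_pi; apply: le_Rintegral => //.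
- exact/continuous_itv_integrable/cst_continuous.
- apply: continuous_itv_integrable => t.
  by apply: cvgD; [exact: cont_r | exact: cont_r_shift].
move=> t _; have := k_le t; have := rot_nrm_ge0 x t; have := rot_nrm_ge0 x (t + pi / 2).
set r1 := rot_nrm x t; set r2 := rot_nrm x (t + pi / 2) => r2_ge0 r1_ge0 k_le_sum.
have : k * k <= (r1 + r2) * (r1 + r2) by apply: ler_pM.
have := sqr_ge0 (r1 - r2); rewrite !expr2; nra.
Qed.

Lemma rot_nrmZ (a : R) x t : rot_nrm (a *: x) t = `|a| * rot_nrm x t.
Proof. by rewrite /rot_nrm -nrmZ // scalerDr !scalerA (mulrC a) (mulrC a). Qed.

Lemma cplx_normZ (a : R) x : cnorm (a *: x) = `|a| * cnorm x.
Proof.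
have cplx_intZ : cplx_int (a *: x) = a ^+ 2 * cplx_int x.
  rewrite /cplx_int -RintegralZl //; last first.
    exact/continuous_itv_integrable/continuous_rot_nrm2.
  by apply: eq_Rintegral => t _; rewrite rot_nrmZ exprMn real_normK ?num_real.
by rewrite !cplx_normE cplx_intZ mulrCA sqrtrM ?sqr_ge0 // sqrtr_sqr.
Qed.

Lemma cplx_norm_eq0 x : cnorm x = 0 -> x = 0.
Proof.
case: x => x1 x2 cx0; have [] := nrm_le_cplx_norm (x1, x2); rewrite cx0 mulr0 /=.
move=> x1_le0 x2_le0.
have -> : x1 = 0 by apply: nrm_eq0 => //; apply/le_anti; rewrite x1_le0 nrm_ge0.
by have -> : x2 = 0 by apply: nrm_eq0 => //; apply/le_anti; rewrite x2_le0 nrm_ge0.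
Qed.

Lemma rot_nrmD x y t : rot_nrm (x + y) t <= rot_nrm x t + rot_nrm y t.
Proof. by rewrite /rot_nrm /= !scalerDr addrACA; exact: nrmD. Qed.

(* Minkowski's inequality for the quadratic mean: integrate [sqrrD_le_weighted]
   with the optimal weight [s = ||y|| / ||x||]. *)
Lemma cplx_normD x y : cnorm (x + y) <= cnorm x + cnorm y.
Proof.
have cnorm0 : cnorm 0 = 0 by rewrite -(scale0r (0 : X * X)) cplx_normZ normr0 mul0r.
have [/cplx_norm_eq0 ->|cx_neq0] := eqVneq (cnorm x) 0.
  by rewrite add0r cnorm0 add0r.
have [/cplx_norm_eq0 ->|cy_neq0] := eqVneq (cnorm y) 0.
  by rewrite addr0 cnorm0 addr0.
have cx_gt0 : 0 < cnorm x by rewrite lt0r cx_neq0 cplx_norm_ge0.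
have cy_gt0 : 0 < cnorm y by rewrite lt0r cy_neq0 cplx_norm_ge0.
pose s := cnorm y / cnorm x.
have s_gt0 : 0 < s by rewrite divr_gt0.
apply: cplx_norm_le_of_int; first by rewrite addr_ge0 ?cplx_norm_ge0.
have -> : 2 * pi * (cnorm x + cnorm y) ^+ 2 =
    (1 + s) * cplx_int x + (1 + s^-1) * cplx_int y.
  by rewrite !cplx_int_norm /s; field; rewrite !gt_eqF.
have cont_x := continuous_rot_nrm2 (x := x).
have cont_y := continuous_rot_nrm2 (x := y).
rewrite /cplx_int -!RintegralZl ?continuous_itv_integrable //.
rewrite -RintegralD //; last 2 first.
- apply: continuous_itv_integrable => t.
  by apply: cvgM; [exact: cvg_cst | exact: cont_x].
- apply: continuous_itv_integrable => t.
  by apply: cvgM; [exact: cvg_cst | exact: cont_y].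
apply: le_Rintegral => //.
- exact/continuous_itv_integrable/continuous_rot_nrm2.
- apply: continuous_itv_integrable => t.
  by apply: cvgD; (apply: cvgM; [exact: cvg_cst | exact: continuous_rot_nrm2]).
move=> t _; apply: le_trans (sqrrD_le_weighted _ _ s_gt0).
by rewrite ler_sqr ?nnegrE ?addr_ge0 ?rot_nrm_ge0 ?rot_nrmD.
Qed.

Lemma cplx_norm_rot (a b : R) (x : X * X) : a ^+ 2 + b ^+ 2 = 1 ->
  cnorm (a *: x + b *: NX x) = cnorm x.
Proof.
move=> /exists_angle [th [cos_th sin_th] th_itv].
have pi_gt0 := pi_gt0 R.
rewrite !cplx_normE -(cplx_int_shift x (c := - th)); last by rewrite mulr2n; lra.
congr (Num.sqrt (_ * _)); apply: eq_Rintegral => t _; congr (nrm _ ^+ 2) => /=.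
rewrite cosB sinB cos_th sin_th (scalerN b x.2) -scaleNr [a *: x.2 + _]addrC.
by rewrite scaler_comb2; congr (_ *: _ + _ *: _); ring.
Qed.

Lemma cplx_norm_complete (u : nat -> X * X) :
  (forall e : R, 0 < e -> exists N, forall m n, (N <= m)%N -> (N <= n)%N ->
      cnorm (u m - u n) < e) ->
  exists l : X * X, forall e : R, 0 < e -> exists N, forall n, (N <= n)%N ->
      cnorm (u n - l) < e.
Proof.
move=> u_cauchy; have [_ _ _ X_complete] := hX.
have [l1 u1_cvg] : exists l : X, forall e : R, 0 < e ->
    exists N, forall n, (N <= n)%N -> nrm ((u n).1 - l) < e.
  apply: X_complete => e e_gt0; have [N u_near] := u_cauchy (e / 2) (ltac:(lra)).
  exists N => m n mN nN; have [/= bound _] := nrm_le_cplx_norm (u m - u n).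
  by have := u_near m n mN nN; lra.
have [l2 u2_cvg] : exists l : X, forall e : R, 0 < e ->
    exists N, forall n, (N <= n)%N -> nrm ((u n).2 - l) < e.
  apply: X_complete => e e_gt0; have [N u_near] := u_cauchy (e / 2) (ltac:(lra)).
  exists N => m n mN nN; have [_ /= bound] := nrm_le_cplx_norm (u m - u n).
  by have := u_near m n mN nN; lra.
exists (l1, l2) => e e_gt0.
have [N1 u1_near] := u1_cvg (e / 2) (ltac:(lra)).
have [N2 u2_near] := u2_cvg (e / 2) (ltac:(lra)).
exists (maxn N1 N2) => n; rewrite geq_max => /andP[n1 n2].
apply: le_lt_trans (cplx_norm_le_add _) _ => /=.
by have := u1_near n n1; have := u2_near n n2; lra.
Qed.

Lemma cplx_banach : is_banach (cplx X).
Proof.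
split; [exact: cplx_norm_eq0 | exact: cplx_normZ | exact: cplx_normD |].
exact: cplx_norm_complete.
Qed.

Lemma iop_NX : iop (@NX R X).
Proof.
have NX_isometry x : cnorm (NX x) = cnorm x.
  have := cplx_norm_rot (a := 0) (b := 1) x; rewrite scale0r add0r scale1r; apply.
  by rewrite expr0n /= add0r expr1n.
split; [split | by case | exact: cplx_norm_rot].
- move=> a x y; change ((- (a *: x.2 + y.2), a *: x.1 + y.1) =
                        (a *: - x.2 + - y.2, a *: x.1 + y.1)).
  by rewrite opprD scalerN.
- by exists 1 => x; change (cnorm (NX x) <= 1 * cnorm x); rewrite mul1r NX_isometry.
Qed.

End Complexification.

Lemma half_scaleD (R : numFieldType) (V : lmodType R) (v : V) : 2^-1 *: (v + v) = v.
Proof.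
have -> : v + v = (2 : R) *: v by rewrite scalerDl scale1r.
by rewrite scalerA mulVf ?scale1r ?pnatr_eq0.
Qed.

Section LinearMap.
Variables (R : realType) (X Y : nspace R) (T : X -> Y).
Hypothesis linT : forall (a : R) (x y : X), T (a *: x + y) = a *: T x + T y.

Lemma linD x y : T (x + y) = T x + T y.
Proof. by have := linT 1 x y; rewrite !scale1r. Qed.

Lemma lin0 : T 0 = 0.
Proof. by apply: (addrI (T 0)); rewrite -linD !addr0. Qed.

Lemma linZ a x : T (a *: x) = a *: T x.
Proof. by have := linT a x 0; rewrite !addr0 lin0 addr0. Qed.

Lemma linN x : T (- x) = - T x.
Proof. by rewrite -scaleN1r linZ scaleN1r. Qed.

End LinearMap.

Section ComplexOperators.
Variable R : realType.
Implicit Types X Y : nspace R.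

Definition cplx_embed X (A : X -> X) : X -> cplx X := fun x => (x, - A x).

Definition cplx_proj X (A : X -> X) : cplx X -> X := fun x => 2^-1 *: (x.1 + A x.2).

Lemma iop_opp X (A : X -> X) : is_banach X -> iop A -> iop (fun x => - A x).
Proof.
move=> hX [[linA [M A_bound]] AA A_rot].
split; [split | by move=> x; rewrite (linN linA) opprK AA |].
- by move=> a x y; rewrite linA opprD scalerN.
- by exists M => x; rewrite nrmN.
- by move=> a b x ab1; rewrite scalerN -scaleNr A_rot // sqrrN.
Qed.

Lemma cop_cplx_embed X (A : X -> X) : is_banach X -> iop A ->
  cop A (@NX R X) (cplx_embed A).
Proof.
move=> hX [[linA [M A_bound]] AA _].
split; [split | by move=> x; rewrite /cplx_embed /NX /= AA !opprK].
- move=> a x y.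
  change ((a *: x + y, - A (a *: x + y)) = (a *: x + y, a *: - A x + - A y)).
  by rewrite linA opprD scalerN.
- exists (1 + `|M|) => x; change (cplx_norm (x, - A x) <= (1 + `|M|) * nrm x).
  apply: le_trans (cplx_norm_le_add hX _) _ => /=.
  rewrite nrmN // mulrDl mul1r lerD2l; apply: le_trans (A_bound x) _.
  by rewrite ler_wpM2r ?nrm_ge0 ?ler_norm.
Qed.

Lemma cop_cplx_proj X (A : X -> X) : is_banach X -> iop A ->
  cop (@NX R X) A (cplx_proj A).
Proof.
move=> hX [[linA [M A_bound]] AA _].
split; [split | by move=> x; rewrite /cplx_proj /NX /= (linZ linA) (linD linA) AA addrC].
- move=> a x y.
  change (2^-1 *: (a *: x.1 + y.1 + A (a *: x.2 + y.2)) =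
          a *: (2^-1 *: (x.1 + A x.2)) + 2^-1 *: (y.1 + A y.2)).
  rewrite linA scalerA mulrC -scalerA -scalerDr; congr (_ *: _).
  by rewrite scalerDr addrACA.
- exists (1 + `|M|) => x.
  change (nrm (2^-1 *: (x.1 + A x.2)) <= (1 + `|M|) * cplx_norm x).
  have [x1_le x2_le] := nrm_le_cplx_norm hX x.
  have Ax2_le : nrm (A x.2) <= `|M| * (2 * cplx_norm x).
    apply: le_trans (A_bound _) _.
    apply: le_trans (ler_wpM2r (nrm_ge0 hX _) (ler_norm M)) _.
    by rewrite ler_wpM2l.
  rewrite nrmZ // ger0_norm ?invr_ge0 //.
  apply: le_trans (ler_wpM2l _ (nrmD hX _ _)) _; first by rewrite invr_ge0.
  rewrite -[leRHS](@mulKf _ 2) ?pnatr_eq0 // ler_wpM2l ?invr_ge0 //.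
  by rewrite mulrCA mulrDl mul1r lerD.
Qed.

Lemma cplx_proj_dsum_embed X Y (A : X -> X) (B : Y -> Y) (T : X -> Y) :
  iop B -> bounded_linear T -> (forall x, T (A x) = B (T x)) ->
  forall x, cplx_proj B (dsum T (cplx_embed A x)) = T x.
Proof.
move=> [[linB _] BB _] [linT _] TA_BT x.
by rewrite /cplx_proj /= (linN linT) TA_BT (linN linB) BB opprK half_scaleD.
Qed.

Lemma dsum_decomp X Y (A : X -> X) (B : Y -> Y) (T : X -> Y) :
  iop B -> bounded_linear T -> (forall x, T (A x) = B (T x)) ->
  forall x, dsum T x = cplx_embed B (T (cplx_proj A x)) +
                       cplx_embed (fun y => - B y) (T (cplx_proj (fun x => - A x) x)).
Proof.
move=> [[linB _] BB _] [linT _] TA_BT x.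
rewrite /dsum /cplx_embed /cplx_proj; congr (_, _) => /=.
- by rewrite -(linD linT) -scalerDr addrACA subrr addr0 half_scaleD.
- rewrite opprK -(linN linB) -(linD linB) -(linN linT) -(linD linT).
  rewrite -scalerN -scalerDr opprD addrACA addNr add0r -opprD scalerN half_scaleD.
  by rewrite (linN linT) TA_BT (linN linB) BB opprK.
Qed.

End ComplexOperators.

Section Ideals.
Variables (R : realType) (C : cideal_fam R).

Lemma complexify_real_form_self_conjugate : self_conjugate (complexify (real_form C)).
Proof.
move=> X Y A B _ _ _ _; apply/seteqP; split=> T [TA_BT realT]; split=> // x;
  have [[linT _] _] := realT.
- by apply: oppr_inj; rewrite -(linN linT) TA_BT.
- by rewrite (linN linT) TA_BT.
Qed.

Hypothesis hC : complex_operator_ideal C.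

Lemma complexify_real_form_sub : cideal_sub (complexify (real_form C)) C.
Proof.
move=> X Y A B hX hY hA hB T [TA_BT [linT CT]].
have [_ _ _ _ C_comp] :=
  hC (cplx_banach hX) (cplx_banach hY) (iop_NX hX) (iop_NX hY).
have -> : T = (fun x => cplx_proj B (dsum T (cplx_embed A x))).
  by apply/funext => x; rewrite (cplx_proj_dsum_embed hB linT TA_BT).
exact: C_comp hX hY hA hB (cop_cplx_embed hX hA) CT (cop_cplx_proj hY hB).
Qed.

Lemma sub_complexify_real_form : self_conjugate C ->
  cideal_sub C (complexify (real_form C)).
Proof.
move=> selfC X Y A B hX hY hA hB T CT.
have [cop_C _ _ _ C_comp] := hC hX hY hA hB.
have [linT TA_BT] := cop_C T CT.
have CT_conj : C (fun x : X => - A x) (fun y : Y => - B y) T.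
  by rewrite -(selfC X Y A B hX hY hA hB) in CT.
have [_ _ _ _ C_comp_conj] := hC hX hY (iop_opp hX hA) (iop_opp hY hB).
have [_ _ C_add _ _] :=
  hC (cplx_banach hX) (cplx_banach hY) (iop_NX hX) (iop_NX hY).
split=> //; split=> //.
have -> : dsum T = fun x => cplx_embed B (T (cplx_proj A x)) +
    cplx_embed (fun y => - B y) (T (cplx_proj (fun x => - A x) x)).
  by apply/funext => x; rewrite (dsum_decomp hB linT TA_BT).
apply: C_add.
- exact: C_comp (cplx_banach hX) (cplx_banach hY) (iop_NX hX) (iop_NX hY)
    (cop_cplx_proj hX hA) CT (cop_cplx_embed hY hB).
- exact: C_comp_conj (cplx_banach hX) (cplx_banach hY) (iop_NX hX) (iop_NX hY)
    (cop_cplx_proj hX (iop_opp hX hA)) CT_conj (cop_cplx_embed hY (iop_opp hY hB)).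
Qed.

End Ideals.

Theorem theorem2 (R : realType) (C : cideal_fam R) :
  complex_operator_ideal C ->
  cideal_sub (complexify (real_form C)) C /\
  (self_conjugate C <-> cideal_eq (complexify (real_form C)) C).
Proof.
move=> hC; split; first exact: complexify_real_form_sub.
split=> [selfC | eqC] X Y A B hX hY hA hB.
- apply/seteqP; split; first exact: complexify_real_form_sub.
  exact: sub_complexify_real_form.
- rewrite /conj_ideal -(eqC X Y _ _ hX hY (iop_opp hX hA) (iop_opp hY hB)).
  rewrite -(eqC X Y A B hX hY hA hB).
  exact: complexify_real_form_self_conjugate.
Qed.
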